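(* Provably in $\mathsf{GB}^{+\infty}$, and also provably in $\mathsf{GB}^{-\infty}$: the Mostowski cut $\mathsf{C}_{\mathsf{Most}}$ is a cut of $\omega$, i.e. it contains $0$, is closed under successor, and is an initial segment of $\omega$.
   Context: $\mathsf{GB}$ is Gödel–Bernays class theory (two sorts: sets and classes). $\mathsf{GB}^{+\infty}=\mathsf{GB}$. $\mathsf{GB}_{\mathsf{fin}}$ is obtained from $\mathsf{GB}$ by replacing the axiom of infinity by its negation, $\mathsf{TC}$ says every set has a transitive closure, and $\mathsf{GB}^{-\infty}=\mathsf{GB}_{\mathsf{fin}}+\mathsf{TC}$. $\omega$ is the class of finite ordinals (a proper class in $\mathsf{GB}^{-\infty}$). Reasoning in these theories: $V$ is the class of all sets; for each set $a$, $c_a$ is a constant naming $a$ (e.g. the pair $\langle a,0\rangle$); $\mathcal{L}^+_{\mathsf{ZF}}$-sentences are codes of $\varphi(c_{a_1},\dots,c_{a_n})$ with $\varphi$ an (internal) $\mathcal{L}_{\mathsf{ZF}}$-formula. $\mathsf{depth}(\varphi)$ is the length of the longest path in the parsing tree of $\varphi$, and $\mathsf{Depth}_k$ is the set of $\mathcal{L}_{\mathsf{ZF}}$-formulas of depth $\le k$ (so $\mathsf{Depth}_0=\varnothing$ and $\mathsf{Depth}_1$ is the set of atomic formulas). For a collection $F$ of $\mathcal{L}_{\mathsf{ZF}}$-formulas closed under immediate subformulas, with $\mathsf{FSent}$ the $\mathcal{L}^+_{\mathsf{ZF}}$-sentences obtained by substituting constants $c_a$ for the free variables of formulas in $F$,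 a class $T$ is an $F$-truth class over $(V,\in)$ if: (1) $T\subseteq\mathsf{FSent}$; (2) $\ulcorner c_a=c_b\urcorner\in T\leftrightarrow a=b$ and $\ulcorner c_a\in c_b\urcorner\in T\leftrightarrow a\in b$; (3) for $\varphi,\psi\in\mathsf{FSent}$ with $\varphi=\neg\psi$: $\varphi\in T\leftrightarrow\psi\notin T$; (4) for $\varphi=\psi_1\vee\psi_2\in\mathsf{FSent}$: $\varphi\in T\leftrightarrow(\psi_1\in T\vee\psi_2\in T)$; (5) for $\varphi=\exists v\,\psi(v)\in\mathsf{FSent}$: $\varphi\in T\leftrightarrow\exists x\,\psi(c_x)\in T$. The Mostowski cut $\mathsf{C}_{\mathsf{Most}}$ is the class of $k\in\omega$ such that there exists a class $T$ that is a $\mathsf{Depth}_k$-truth class over $(V,\in)$. *)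

(* Semantic rendering of "provably in GB^{+oo} / GB^{-oo}":
   the claim holds in every two-sorted model (sets, classes) of the theory.
   All internal notions (omega, codes of formulas, substitution, depth, truth
   classes) are defined inside the model, by first-order conditions over its
   sets and classes, so nonstandard models are handled correctly. *)

Section GBModel.

Variables (S C : Type) (ein : S -> S -> Prop) (cin : S -> C -> Prop).

Definition empty (z : S) := forall w, ~ ein w z.
Definition sing (s a : S) := forall w, ein w s <-> w = a.
Definition upair (s a b : S) := forall w, ein w s <-> (w = a \/ w = b).
Definition opair (p a b : S) := forall w, ein w p <-> (sing w a \/ upair w a b).
Definition succ (y y' : S) := forall w, ein w y' <-> (ein w y \/ w = y).
Definition transitive (x : S) := forall y z, ein z y -> ein y x -> ein z x.
Definition ordinal (x : S) := transitive x /\ forall y, ein y x -> transitive y.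
Definition is_nat (n : S) :=
  ordinal n /\ forall m, (ein m n \/ m = n) -> empty m \/ exists m', succ m' m.
(* standard (meta-level) numerals, used only as syntactic tags 0..4 *)
Fixpoint is_num (k : nat) (x : S) : Prop :=
  match k with
  | O => empty x
  | Datatypes.S k' => exists y, is_num k' y /\ succ y x
  end.
Definition tagged (k : nat) (x q : S) := exists t, is_num k t /\ opair x t q.

Definition func (f : S) :=
  (forall p, ein p f -> exists a b, opair p a b) /\
  (forall p p' a b b', opair p a b -> opair p' a b' -> ein p f -> ein p' f -> b = b').
Definition app (f a b : S) := exists p, opair p a b /\ ein p f.
Definition remove (f i g : S) :=
  forall p, ein p g <-> (ein p f /\ exists a b, opair p a b /\ a <> i).

(* constant c_a = <a,0>; variable v_i = <i,1> (i in omega) *)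
Definition const_t (t a : S) := exists z, empty z /\ opair t a z.
Definition var_t (t i : S) := is_nat i /\ exists o, is_num 1 o /\ opair t i o.
Definition term (t : S) := (exists a, const_t t a) \/ (exists i, var_t t i).
(* codes: (t = s) = <0,<t,s>>, (t in s) = <1,<t,s>>, ~phi = <2,phi>,
   phi \/ psi = <3,<phi,psi>>, Exists v_i phi = <4,<i,phi>> *)
Definition f_eq (x t s : S) := exists q, opair q t s /\ tagged 0 x q.
Definition f_in (x t s : S) := exists q, opair q t s /\ tagged 1 x q.
Definition f_neg (x phi : S) := tagged 2 x phi.
Definition f_or (x phi psi : S) := exists q, opair q phi psi /\ tagged 3 x q.
Definition f_ex (x i phi : S) := is_nat i /\ exists q, opair q i phi /\ tagged 4 x q.

Definition atomic_pure (x : S) :=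
  exists t s i j, var_t t i /\ var_t s j /\ (f_eq x t s \/ f_in x t s).

(* x is an (internal) L_ZF formula: x lies in a set closed under immediate
   subformulas all of whose members are atomic or built from members *)
Definition pure (x : S) :=
  exists X, ein x X /\ forall y, ein y X ->
    atomic_pure y \/
    (exists phi, f_neg y phi /\ ein phi X) \/
    (exists phi psi, f_or y phi psi /\ ein phi X /\ ein psi X) \/
    (exists i phi, f_ex y i phi /\ ein phi X).

(* depth(x) <= k, depth = length of longest path in the parsing tree
   (atomic formulas have depth 1) *)
Definition depth_le (x k : S) :=
  exists W,
    let inW := fun y d => exists p, opair p y d /\ ein p W in
    inW x k /\
    forall p, ein p W -> exists y d, opair p y d /\ is_nat d /\
      ((exists t s, term t /\ term s /\ (f_eq y t s \/ f_in y t s) /\ ~ empty d) \/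
       (exists d', succ d' d /\
          ((exists phi, f_neg y phi /\ inW phi d') \/
           (exists phi psi, f_or y phi psi /\ inW phi d' /\ inW psi d') \/
           (exists i phi, f_ex y i phi /\ inW phi d')))).

Definition in_Depth (k x : S) := pure x /\ depth_le x k.

Definition sub_term (f t t' : S) :=
  (exists i a, var_t t i /\ app f i a /\ const_t t' a) \/
  ((~ exists i a, var_t t i /\ app f i a) /\ t' = t).

(* Sub f phi sigma : sigma is the result of replacing in the L^+ formula phi
   every free occurrence of a variable v_i with i in dom f by c_(f i) *)
Definition Sub (f phi sigma : S) :=
  func f /\
  exists W,
    let inW := fun g psi tau =>
      exists p q, opair q psi tau /\ opair p g q /\ ein p W in
    inW f phi sigma /\
    forall p, ein p W -> exists g psi tau q, opair q psi tau /\ opair p g q /\ func g /\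
      ((exists t s t' s', term t /\ term s /\ sub_term g t t' /\ sub_term g s s' /\
          ((f_eq psi t s /\ f_eq tau t' s') \/ (f_in psi t s /\ f_in tau t' s'))) \/
       (exists phi1 tau1, f_neg psi phi1 /\ f_neg tau tau1 /\ inW g phi1 tau1) \/
       (exists phi1 phi2 tau1 tau2, f_or psi phi1 phi2 /\ f_or tau tau1 tau2 /\
          inW g phi1 tau1 /\ inW g phi2 tau2) \/
       (exists i phi1 tau1 h, f_ex psi i phi1 /\ f_ex tau i tau1 /\ remove g i h /\
          inW h phi1 tau1)).

(* closed_in G x : x is an L^+ formula all of whose free variables have
   indices in the set G *)
Definition closed_in (G x : S) :=
  exists W,
    let inW := fun G' y => exists p, opair p G' y /\ ein p W in
    inW G x /\
    forall p, ein p W -> exists G' y, opair p G' y /\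
      ((exists t s, term t /\ term s /\ (f_eq y t s \/ f_in y t s) /\
          (forall i, var_t t i -> ein i G') /\ (forall i, var_t s i -> ein i G')) \/
       (exists phi, f_neg y phi /\ inW G' phi) \/
       (exists phi psi, f_or y phi psi /\ inW G' phi /\ inW G' psi) \/
       (exists i phi G'', f_ex y i phi /\
          (forall w, ein w G'' <-> (ein w G' \/ w = i)) /\ inW G'' phi)).

Definition sentence (x : S) := exists z, empty z /\ closed_in z x.

Definition FSent (k sigma : S) :=
  sentence sigma /\ exists phi f, in_Depth k phi /\ Sub f phi sigma.

Definition Sub1 (i x psi sigma : S) :=
  exists f, (forall p, ein p f <-> opair p i x) /\ Sub f psi sigma.

Definition truth_class (k : S) (T : C) :=
  (forall x, cin x T -> FSent k x) /\
  (forall x t s a b, FSent k x -> const_t t a -> const_t s b -> f_eq x t s ->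
      (cin x T <-> a = b)) /\
  (forall x t s a b, FSent k x -> const_t t a -> const_t s b -> f_in x t s ->
      (cin x T <-> ein a b)) /\
  (forall phi psi, FSent k phi -> FSent k psi -> f_neg phi psi ->
      (cin phi T <-> ~ cin psi T)) /\
  (forall phi psi1 psi2, FSent k phi -> f_or phi psi1 psi2 ->
      (cin phi T <-> (cin psi1 T \/ cin psi2 T))) /\
  (forall phi i psi, FSent k phi -> f_ex phi i psi ->
      (cin phi T <-> exists x sigma, Sub1 i x psi sigma /\ cin sigma T)).

Definition C_Most (k : S) := is_nat k /\ exists T, truth_class k T.

Definition is_cut_Most :=
  (forall z, empty z -> C_Most z) /\
  (forall k k', C_Most k -> succ k k' -> C_Most k') /\
  (forall k j, C_Most k -> is_nat j -> ein j k -> C_Most j).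

(* formulas of the two-sorted language without class quantifiers
   (de Bruijn indices; separate index spaces for set and class variables) *)
Inductive fm : Type :=
  | FIn (i j : nat)
  | FEq (i j : nat)
  | FCIn (i j : nat)
  | FBot
  | FImp (p q : fm)
  | FAll (p : fm).

Definition scons (x : S) (e : nat -> S) (n : nat) : S :=
  match n with O => x | Datatypes.S n' => e n' end.

Fixpoint sat (e : nat -> S) (E : nat -> C) (p : fm) : Prop :=
  match p with
  | FIn i j => ein (e i) (e j)
  | FEq i j => e i = e j
  | FCIn i j => cin (e i) (E j)
  | FBot => False
  | FImp p q => sat e E p -> sat e E q
  | FAll p => forall x, sat (scons x e) E p
  end.

Definition GB_base :=
  inhabited S /\
  (forall a b, (forall x, ein x a <-> ein x b) -> a = b) /\
  (forall X Y : C, (forall x, cin x X <-> cin x Y) -> X = Y) /\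
  (forall a, exists X, forall x, cin x X <-> ein x a) /\
  (forall a b, exists c, upair c a b) /\
  (forall a, exists u, forall x, ein x u <-> exists y, ein y a /\ ein x y) /\
  (forall a, exists q, forall x, ein x q <-> forall z, ein z x -> ein z a) /\
  (forall a, (exists y, ein y a) -> exists y, ein y a /\ forall z, ein z y -> ~ ein z a) /\
  (forall a X, exists b, forall x, ein x b <-> (ein x a /\ cin x X)) /\
  (forall (F : C),
     (forall p p' x y y', opair p x y -> opair p' x y' -> cin p F -> cin p' F -> y = y') ->
     forall a, exists b, forall y, ein y b <-> exists x p, ein x a /\ opair p x y /\ cin p F) /\
  (forall (p : fm) (e : nat -> S) (E : nat -> C),
     exists X, forall x, cin x X <-> sat (scons x e) E p).

Definition Infinity :=
  exists a, (exists z, empty z /\ ein z a) /\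
            forall y, ein y a -> exists y', succ y y' /\ ein y' a.

Definition TC :=
  forall a, exists t, transitive t /\ (forall x, ein x a -> ein x t) /\
    forall t', transitive t' -> (forall x, ein x a -> ein x t') ->
      forall x, ein x t -> ein x t'.

Definition GB_plus_inf := GB_base /\ Infinity.
Definition GB_minus_inf := GB_base /\ ~ Infinity /\ TC.

End GBModel.

(* The empty class is a Depth_0-truth class, since Depth_0 is empty.  Given a Depth_k-truth
   class T, the Depth_(k+1)-sentences satisfying Tarski's clauses relative to T form a class by
   predicative comprehension (the clauses mention T but quantify over sets only), and this class
   is a Depth_(k+1)-truth class: every immediate subsentence of a Depth_(k+1)-sentence, and every
   instance psi(c_a) of an existential one, is a Depth_k-sentence, on which the two classes agree.
   Restricting a Depth_k-truth class to Depth_j-sentences, j < k, gives a Depth_j-truth class. *)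

From Pilot Require Import Defs.
From Stdlib Require Import Classical.

Section MostowskiCut.

Context {V C : Type} {ein : V -> V -> Prop} {cin : V -> C -> Prop}.
Hypothesis HGB : GB_base V C ein cin.

Local Notation empty := (Defs.empty V ein).
Local Notation sing := (Defs.sing V ein).
Local Notation upair := (Defs.upair V ein).
Local Notation opair := (Defs.opair V ein).
Local Notation succ := (Defs.succ V ein).
Local Notation is_nat := (Defs.is_nat V ein).
Local Notation is_num := (Defs.is_num V ein).
Local Notation tagged := (Defs.tagged V ein).
Local Notation const_t := (Defs.const_t V ein).
Local Notation var_t := (Defs.var_t V ein).
Local Notation term := (Defs.term V ein).
Local Notation f_eq := (Defs.f_eq V ein).
Local Notation f_in := (Defs.f_in V ein).
Local Notation f_neg := (Defs.f_neg V ein).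
Local Notation f_or := (Defs.f_or V ein).
Local Notation f_ex := (Defs.f_ex V ein).
Local Notation func := (Defs.func V ein).
Local Notation app := (Defs.app V ein).
Local Notation remove := (Defs.remove V ein).
Local Notation sub_term := (Defs.sub_term V ein).
Local Notation atomic_pure := (Defs.atomic_pure V ein).
Local Notation pure := (Defs.pure V ein).
Local Notation in_Depth := (Defs.in_Depth V ein).
Local Notation sentence := (Defs.sentence V ein).
Local Notation transitive := (Defs.transitive V ein).
Local Notation ordinal := (Defs.ordinal V ein).
Local Notation depth_le := (Defs.depth_le V ein).
Local Notation Sub := (Defs.Sub V ein).
Local Notation closed_in := (Defs.closed_in V ein).
Local Notation FSent := (Defs.FSent V ein).
Local Notation Sub1 := (Defs.Sub1 V ein).
Local Notation truth_class := (Defs.truth_class V C ein cin).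
Local Notation C_Most := (Defs.C_Most V C ein cin).

(** * Definable predicates *)

Definition definable (E : nat -> C) (P : (nat -> V) -> Prop) :=
  exists p : fm, forall e, sat V C ein cin e E p <-> P e.

Lemma def_in E i j : definable E (fun e => ein (e i) (e j)).
Proof. exists (FIn i j); reflexivity. Qed.

Lemma def_eq E i j : definable E (fun e => e i = e j).
Proof. exists (FEq i j); reflexivity. Qed.

Lemma def_cin_const X i : definable (fun _ => X) (fun e => cin (e i) X).
Proof. exists (FCIn i 0); reflexivity. Qed.

Lemma def_false E : definable E (fun _ => False).
Proof. exists FBot; reflexivity. Qed.

Lemma def_imp E P Q :
  definable E P -> definable E Q -> definable E (fun e => P e -> Q e).
Proof. intros [p Hp] [q Hq]; exists (FImp p q); intro e; simpl; rewrite Hp, Hq; tauto. Qed.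

Lemma def_not E P : definable E P -> definable E (fun e => ~ P e).
Proof. intro HP; exact (def_imp E P _ HP (def_false E)). Qed.

Lemma def_and E P Q :
  definable E P -> definable E Q -> definable E (fun e => P e /\ Q e).
Proof.
  intros HP HQ; destruct (def_not E _ (def_imp E _ _ HP (def_not E _ HQ))) as [p Hp].
  exists p; intro e; rewrite Hp; tauto.
Qed.

Lemma def_or E P Q :
  definable E P -> definable E Q -> definable E (fun e => P e \/ Q e).
Proof.
  intros HP HQ; destruct (def_imp E _ _ (def_not E _ HP) HQ) as [p Hp].
  exists p; intro e; rewrite Hp; split; [|tauto].
  intro H; destruct (classic (P e)); auto.
Qed.

Lemma def_iff E P Q :
  definable E P -> definable E Q -> definable E (fun e => P e <-> Q e).
Proof. intros HP HQ; apply def_and; apply def_imp; assumption. Qed.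

(* de Bruijn convention: the quantified variable is [e 0]. *)
Lemma def_all E (P : V -> (nat -> V) -> Prop) :
  definable E (fun e => P (e 0) (fun n => e (Datatypes.S n))) ->
  definable E (fun e => forall x, P x e).
Proof.
  intros [p Hp]; exists (FAll p); intro e; simpl; split; intros H x; specialize (H x);
    [apply Hp in H | apply Hp]; exact H.
Qed.

Lemma def_ex E (P : V -> (nat -> V) -> Prop) :
  definable E (fun e => P (e 0) (fun n => e (Datatypes.S n))) ->
  definable E (fun e => exists x, P x e).
Proof.
  intro HP; destruct (def_not E _ (def_all E (fun x e => ~ P x e) (def_not E _ HP))) as [p Hp].
  exists p; intro e; rewrite Hp; split.
  - intro H; apply NNPP; intro H'; apply H; intros x Hx; apply H'; exists x; exact Hx.
  - intros [x Hx] H; exact (H x Hx).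
Qed.

Create HintDb definable discriminated.

Ltac prove_definable :=
  repeat (cbv beta; first
    [ solve [auto with definable]
    | apply def_in | apply def_eq | apply def_cin_const | apply def_false
    | apply def_and | apply def_or | apply def_iff | apply def_not | apply def_imp
    | apply def_all | apply def_ex ]).

Lemma def_empty E i : definable E (fun e => empty (e i)).
Proof. unfold Defs.empty; prove_definable. Qed.
#[local] Hint Resolve def_empty : definable.
Lemma def_sing E i j : definable E (fun e => sing (e i) (e j)).
Proof. unfold Defs.sing; prove_definable. Qed.
#[local] Hint Resolve def_sing : definable.
Lemma def_upair E i j k : definable E (fun e => upair (e i) (e j) (e k)).
Proof. unfold Defs.upair; prove_definable. Qed.
#[local] Hint Resolve def_upair : definable.
Lemma def_opair E i j k : definable E (fun e => opair (e i) (e j) (e k)).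
Proof. unfold Defs.opair; prove_definable. Qed.
#[local] Hint Resolve def_opair : definable.
Lemma def_succ E i j : definable E (fun e => succ (e i) (e j)).
Proof. unfold Defs.succ; prove_definable. Qed.
#[local] Hint Resolve def_succ : definable.
Lemma def_transitive E i : definable E (fun e => transitive (e i)).
Proof. unfold Defs.transitive; prove_definable. Qed.
#[local] Hint Resolve def_transitive : definable.
Lemma def_ordinal E i : definable E (fun e => ordinal (e i)).
Proof. unfold Defs.ordinal; prove_definable. Qed.
#[local] Hint Resolve def_ordinal : definable.
Lemma def_is_nat E i : definable E (fun e => is_nat (e i)).
Proof. unfold Defs.is_nat; prove_definable. Qed.
#[local] Hint Resolve def_is_nat : definable.
Lemma def_is_num E n i : definable E (fun e => is_num n (e i)).
Proof. revert i; induction n; intro i; simpl; prove_definable. Qed.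
#[local] Hint Resolve def_is_num : definable.

Lemma def_tagged E n i j : definable E (fun e => tagged n (e i) (e j)).
Proof. unfold Defs.tagged; prove_definable. Qed.
#[local] Hint Resolve def_tagged : definable.
Lemma def_func E i : definable E (fun e => func (e i)).
Proof. unfold Defs.func; prove_definable. Qed.
#[local] Hint Resolve def_func : definable.
Lemma def_app E i j k : definable E (fun e => app (e i) (e j) (e k)).
Proof. unfold Defs.app; prove_definable. Qed.
#[local] Hint Resolve def_app : definable.
Lemma def_remove E i j k : definable E (fun e => remove (e i) (e j) (e k)).
Proof. unfold Defs.remove; prove_definable. Qed.
#[local] Hint Resolve def_remove : definable.
Lemma def_const_t E i j : definable E (fun e => const_t (e i) (e j)).
Proof. unfold Defs.const_t; prove_definable. Qed.
#[local] Hint Resolve def_const_t : definable.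
Lemma def_var_t E i j : definable E (fun e => var_t (e i) (e j)).
Proof. unfold Defs.var_t; prove_definable. Qed.
#[local] Hint Resolve def_var_t : definable.
Lemma def_term E i : definable E (fun e => term (e i)).
Proof. unfold Defs.term; prove_definable. Qed.
#[local] Hint Resolve def_term : definable.
Lemma def_f_eq E i j k : definable E (fun e => f_eq (e i) (e j) (e k)).
Proof. unfold Defs.f_eq; prove_definable. Qed.
#[local] Hint Resolve def_f_eq : definable.
Lemma def_f_in E i j k : definable E (fun e => f_in (e i) (e j) (e k)).
Proof. unfold Defs.f_in; prove_definable. Qed.
#[local] Hint Resolve def_f_in : definable.
Lemma def_f_neg E i j : definable E (fun e => f_neg (e i) (e j)).
Proof. unfold Defs.f_neg; prove_definable. Qed.
#[local] Hint Resolve def_f_neg : definable.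
Lemma def_f_or E i j k : definable E (fun e => f_or (e i) (e j) (e k)).
Proof. unfold Defs.f_or; prove_definable. Qed.
#[local] Hint Resolve def_f_or : definable.
Lemma def_f_ex E i j k : definable E (fun e => f_ex (e i) (e j) (e k)).
Proof. unfold Defs.f_ex; prove_definable. Qed.
#[local] Hint Resolve def_f_ex : definable.
Lemma def_atomic_pure E i : definable E (fun e => atomic_pure (e i)).
Proof. unfold Defs.atomic_pure; prove_definable. Qed.
#[local] Hint Resolve def_atomic_pure : definable.
Lemma def_pure E i : definable E (fun e => pure (e i)).
Proof. unfold Defs.pure; prove_definable. Qed.
#[local] Hint Resolve def_pure : definable.
Lemma def_depth_le E i j : definable E (fun e => depth_le (e i) (e j)).
Proof. unfold Defs.depth_le; prove_definable. Qed.
#[local] Hint Resolve def_depth_le : definable.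
Lemma def_in_Depth E i j : definable E (fun e => in_Depth (e i) (e j)).
Proof. unfold Defs.in_Depth; prove_definable. Qed.
#[local] Hint Resolve def_in_Depth : definable.
Lemma def_sub_term E i j k : definable E (fun e => sub_term (e i) (e j) (e k)).
Proof. unfold Defs.sub_term; prove_definable. Qed.
#[local] Hint Resolve def_sub_term : definable.
Lemma def_Sub E i j k : definable E (fun e => Sub (e i) (e j) (e k)).
Proof. unfold Defs.Sub; prove_definable. Qed.
#[local] Hint Resolve def_Sub : definable.
Lemma def_closed_in E i j : definable E (fun e => closed_in (e i) (e j)).
Proof. unfold Defs.closed_in; prove_definable. Qed.
#[local] Hint Resolve def_closed_in : definable.
Lemma def_sentence E i : definable E (fun e => sentence (e i)).
Proof. unfold Defs.sentence; prove_definable. Qed.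
#[local] Hint Resolve def_sentence : definable.
Lemma def_FSent E i j : definable E (fun e => FSent (e i) (e j)).
Proof. unfold Defs.FSent; prove_definable. Qed.
#[local] Hint Resolve def_FSent : definable.
Lemma def_Sub1 E i j k l : definable E (fun e => Sub1 (e i) (e j) (e k) (e l)).
Proof. unfold Defs.Sub1; prove_definable. Qed.
#[local] Hint Resolve def_Sub1 : definable.

(** * Set theory in GB *)

Lemma set_ext a b : (forall x, ein x a <-> ein x b) -> a = b.
Proof. apply HGB. Qed.

Lemma pairing a b : exists c, upair c a b.
Proof. apply HGB. Qed.

Lemma union_set a : exists u, forall x, ein x u <-> exists y, ein y a /\ ein x y.
Proof. apply HGB. Qed.

Lemma power_set a : exists q, forall x, ein x q <-> forall z, ein z x -> ein z a.
Proof. apply HGB. Qed.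

Lemma foundation a :
  (exists y, ein y a) -> exists y, ein y a /\ forall z, ein z y -> ~ ein z a.
Proof. apply HGB. Qed.

Lemma separation a X : exists b, forall x, ein x b <-> ein x a /\ cin x X.
Proof. apply HGB. Qed.

Lemma replacement (F : C) :
  (forall p p' x y y', opair p x y -> opair p' x y' -> cin p F -> cin p' F -> y = y') ->
  forall a, exists b, forall y, ein y b <-> exists x p, ein x a /\ opair p x y /\ cin p F.
Proof. apply HGB. Qed.

Lemma classes_inhabited : inhabited C.
Proof.
  destruct HGB as [[a] [_ [_ [Hset _]]]].
  destruct (Hset a) as [X _]; exact (inhabits X).
Qed.

Lemma definable_class E P :
  definable E P -> forall e0, exists X, forall x, cin x X <-> P (scons V x e0).
Proof.
  intros [p Hp] e0; destruct HGB as [_ [_ [_ [_ [_ [_ [_ [_ [_ [_ Hcomp]]]]]]]]]].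
  destruct (Hcomp p e0 E) as [X HX]; exists X; intro x; rewrite HX; apply Hp.
Qed.

Lemma set_class P :
  (forall E, definable E P) -> forall e0, exists X, forall x, cin x X <-> P (scons V x e0).
Proof.
  intros HP e0; destruct classes_inhabited as [X0].
  exact (definable_class _ P (HP (fun _ => X0)) e0).
Qed.

Lemma empty_exists : exists z, empty z.
Proof.
  destruct HGB as [[a] _].
  destruct (set_class (fun _ => False) (def_false) (fun _ => a)) as [X HX].
  destruct (separation a X) as [z Hz]; exists z; intros w Hw.
  apply Hz, proj2, HX in Hw; exact Hw.
Qed.

Lemma sing_exists a : exists s, sing s a.
Proof. destruct (pairing a a) as [c Hc]; exists c; intro w; rewrite (Hc w); tauto. Qed.

Lemma sing_unique s s' a : sing s a -> sing s' a -> s = s'.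
Proof. intros H H'; apply set_ext; intro x; rewrite (H x), (H' x); tauto. Qed.

Lemma upair_unique s s' a b : upair s a b -> upair s' a b -> s = s'.
Proof. intros H H'; apply set_ext; intro x; rewrite (H x), (H' x); tauto. Qed.

Lemma opair_exists a b : exists p, opair p a b.
Proof.
  destruct (sing_exists a) as [s Hs]; destruct (pairing a b) as [u Hu].
  destruct (pairing s u) as [p Hp]; exists p; intro w; rewrite (Hp w); split.
  - intros [-> | ->]; auto.
  - intros [H | H]; [left; exact (sing_unique _ _ _ H Hs) |
                      right; exact (upair_unique _ _ _ _ H Hu)].
Qed.

Lemma opair_unique p q a b : opair p a b -> opair q a b -> p = q.
Proof. intros H H'; apply set_ext; intro x; rewrite (H x), (H' x); tauto. Qed.

Lemma opair_inj p a b c d : opair p a b -> opair p c d -> a = c /\ b = d.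
Proof.
  intros H1 H2.
  assert (Hac : a = c).
  { destruct (sing_exists a) as [sa Hsa].
    destruct (proj1 (H2 sa) (proj2 (H1 sa) (or_introl Hsa))) as [H | H].
    - symmetry; apply Hsa, H; reflexivity.
    - symmetry; apply Hsa, H; auto. }
  subst c; split; [reflexivity|].
  destruct (pairing a b) as [u Hu].
  destruct (proj1 (H2 u) (proj2 (H1 u) (or_intror Hu))) as [H | H].
  - assert (b = a) by (apply H, Hu; auto).
    destruct (pairing a d) as [ud Hud].
    destruct (proj1 (H1 ud) (proj2 (H2 ud) (or_intror Hud))) as [H' | H'].
    + assert (d = a) by (apply H', Hud; auto); congruence.
    + destruct (proj1 (H' d) (proj2 (Hud d) (or_intror eq_refl))); congruence.
  - destruct (proj1 (Hu d) (proj2 (H d) (or_intror eq_refl))) as [-> | ]; [|auto].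
    destruct (proj1 (H b) (proj2 (Hu b) (or_intror eq_refl))); congruence.
Qed.

Lemma union2_exists a b : exists u, forall x, ein x u <-> ein x a \/ ein x b.
Proof.
  destruct (pairing a b) as [c Hc]; destruct (union_set c) as [u Hu].
  exists u; intro x; rewrite Hu; split.
  - intros [y [Hy Hx]]; apply Hc in Hy; destruct Hy; subst; auto.
  - intros [H | H]; [exists a | exists b]; rewrite (Hc _); auto.
Qed.

Lemma succ_exists y : exists y', succ y y'.
Proof.
  destruct (sing_exists y) as [s Hs]; destruct (union2_exists y s) as [u Hu].
  exists u; intro w; rewrite (Hu w), (Hs w); tauto.
Qed.

Lemma succ_unique y x x' : succ y x -> succ y x' -> x = x'.
Proof. intros H H'; apply set_ext; intro w; rewrite (H w), (H' w); tauto. Qed.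

Lemma in_succ y x : succ y x -> ein y x.
Proof. intro H; apply H; auto. Qed.

Lemma mem_asym a b : ein a b -> ~ ein b a.
Proof.
  intros Hab Hba; destruct (pairing a b) as [c Hc].
  destruct (foundation c) as [y [Hy Hmin]]; [exists a; apply Hc; auto|].
  apply Hc in Hy; destruct Hy; subst.
  - apply (Hmin b); auto; apply Hc; auto.
  - apply (Hmin a); auto; apply Hc; auto.
Qed.

Lemma succ_inj y y' x : succ y x -> succ y' x -> y = y'.
Proof.
  intros H H'.
  destruct (proj1 (H' y) (in_succ _ _ H)) as [Hy | ]; [|auto].
  destruct (proj1 (H y') (in_succ _ _ H')) as [Hy' | ]; [|auto].
  destruct (mem_asym _ _ Hy Hy').
Qed.

Lemma image_set (R : V -> V -> Prop) :
  (forall E i j, definable E (fun e => R (e i) (e j))) ->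
  (forall x y y', R x y -> R x y' -> y = y') ->
  forall A, exists B, forall y, ein y B <-> exists x, ein x A /\ R x y.
Proof.
  intros HR Hfun A.
  destruct (set_class (fun e => exists x y, opair (e 0) x y /\ R x y)
              (fun E => ltac:(prove_definable; apply HR)) (fun _ => A)) as [F HF].
  destruct (replacement F) with (a := A) as [B HB].
  { intros p p' x y y' Hp Hp' HpF Hp'F; apply HF in HpF, Hp'F.
    destruct HpF as [x1 [y1 [H1 H2]]], Hp'F as [x2 [y2 [H3 H4]]].
    destruct (opair_inj _ _ _ _ _ Hp H1) as [<- <-], (opair_inj _ _ _ _ _ Hp' H3) as [<- <-].
    exact (Hfun _ _ _ H2 H4). }
  exists B; intro y; rewrite HB; split.
  - intros [x [p [Hx [Hp HpF]]]]; apply HF in HpF; destruct HpF as [x1 [y1 [H1 H2]]].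
    destruct (opair_inj _ _ _ _ _ Hp H1) as [<- <-]; eauto.
  - intros [x [Hx HRxy]]; destruct (opair_exists x y) as [p Hp].
    exists x, p; split; [exact Hx | split; [exact Hp | apply HF; eauto]].
Qed.

Lemma product_set A B :
  exists P, forall w, ein w P <-> exists x y, ein x A /\ ein y B /\ opair w x y.
Proof.
  destruct (union2_exists A B) as [U HU].
  destruct (power_set U) as [P1 HP1]; destruct (power_set P1) as [P2 HP2].
  destruct (set_class (fun e => exists x y, ein x (e 1) /\ ein y (e 2) /\ opair (e 0) x y)
              (fun E => ltac:(prove_definable)) (fun n => match n with 0 => A | _ => B end))
    as [X HX].
  destruct (separation P2 X) as [P HP]; exists P; intro w; rewrite HP, HX; simpl; split.
  - intros [_ H]; exact H.
  - intros [x [y [Hx [Hy Hw]]]]; split; [|eauto].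
    apply HP2; intros s Hs; apply HP1; intros a Ha; apply HU.
    apply Hw in Hs; destruct Hs as [Hs | Hs]; apply Hs in Ha; [|destruct Ha]; subst; auto.
Qed.

Lemma image2_set (R : V -> V -> V -> Prop) :
  (forall E i j k, definable E (fun e => R (e i) (e j) (e k))) ->
  (forall x y z z', R x y z -> R x y z' -> z = z') ->
  forall A B, exists W, forall z, ein z W <-> exists x y, ein x A /\ ein y B /\ R x y z.
Proof.
  intros HR Hfun A B; destruct (product_set A B) as [P HP].
  destruct (image_set (fun w z => exists x y, opair w x y /\ R x y z)) with (A := P) as [W HW].
  - intros E i j; prove_definable; apply HR.
  - intros w z z' [x [y [H1 H2]]] [x' [y' [H3 H4]]].
    destruct (opair_inj _ _ _ _ _ H1 H3) as [<- <-]; exact (Hfun _ _ _ _ H2 H4).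
  - exists W; intro z; rewrite HW; split.
    + intros [w [Hw [x [y [H1 H2]]]]]; apply HP in Hw; destruct Hw as [x' [y' [Hx [Hy H3]]]].
      destruct (opair_inj _ _ _ _ _ H1 H3) as [<- <-]; eauto 6.
    + intros [x [y [Hx [Hy Hz]]]]; destruct (opair_exists x y) as [w Hw].
      exists w; split; [apply HP|]; eauto 6.
Qed.

(** * Codes of formulas *)

Lemma is_num_inj k m x : is_num k x -> is_num m x -> k = m.
Proof.
  revert m x; induction k as [|k IH]; intros [|m] x; simpl; intros H H'; auto.
  - destruct H' as [y [_ Hy]]; destruct (H y (in_succ _ _ Hy)).
  - destruct H as [y [_ Hy]]; destruct (H' y (in_succ _ _ Hy)).
  - destruct H as [y [Hy Hs]], H' as [y' [Hy' Hs']].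
    rewrite (succ_inj _ _ _ Hs Hs') in Hy; f_equal; exact (IH _ _ Hy Hy').
Qed.

Lemma tagged_inj k m x q q' : tagged k x q -> tagged m x q' -> k = m /\ q = q'.
Proof.
  intros [t [Ht Hx]] [t' [Ht' Hx']].
  destruct (opair_inj _ _ _ _ _ Hx Hx') as [<- <-].
  split; [exact (is_num_inj _ _ _ Ht Ht') | reflexivity].
Qed.

Lemma tagged_pair_inj k x q q' a b c d :
  opair q a b -> tagged k x q -> opair q' c d -> tagged k x q' -> a = c /\ b = d.
Proof.
  intros Hq Hx Hq' Hx'; destruct (tagged_inj _ _ _ _ _ Hx Hx') as [_ <-].
  exact (opair_inj _ _ _ _ _ Hq Hq').
Qed.

Lemma f_eq_inj x t s t' s' : f_eq x t s -> f_eq x t' s' -> t = t' /\ s = s'.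
Proof.
  intros [q [Hq Hx]] [q' [Hq' Hx']]; exact (tagged_pair_inj _ _ _ _ _ _ _ _ Hq Hx Hq' Hx').
Qed.

Lemma f_in_inj x t s t' s' : f_in x t s -> f_in x t' s' -> t = t' /\ s = s'.
Proof.
  intros [q [Hq Hx]] [q' [Hq' Hx']]; exact (tagged_pair_inj _ _ _ _ _ _ _ _ Hq Hx Hq' Hx').
Qed.

Lemma f_or_inj x t s t' s' : f_or x t s -> f_or x t' s' -> t = t' /\ s = s'.
Proof.
  intros [q [Hq Hx]] [q' [Hq' Hx']]; exact (tagged_pair_inj _ _ _ _ _ _ _ _ Hq Hx Hq' Hx').
Qed.

Lemma f_ex_inj x t s t' s' : f_ex x t s -> f_ex x t' s' -> t = t' /\ s = s'.
Proof.
  intros [_ [q [Hq Hx]]] [_ [q' [Hq' Hx']]]; exact (tagged_pair_inj _ _ _ _ _ _ _ _ Hq Hx Hq' Hx').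
Qed.

Lemma f_neg_inj x t t' : f_neg x t -> f_neg x t' -> t = t'.
Proof. intros H H'; exact (proj2 (tagged_inj _ _ _ _ _ H H')). Qed.

Definition code_tag (x : V) (k : nat) := exists q, tagged k x q.

Lemma code_tag_unique x k m : code_tag x k -> code_tag x m -> k = m.
Proof. intros [q Hq] [q' Hq']; exact (proj1 (tagged_inj _ _ _ _ _ Hq Hq')). Qed.

Lemma f_eq_tag x t s : f_eq x t s -> code_tag x 0.
Proof. intros [q [_ H]]; exists q; exact H. Qed.

Lemma f_in_tag x t s : f_in x t s -> code_tag x 1.
Proof. intros [q [_ H]]; exists q; exact H. Qed.

Lemma f_neg_tag x t : f_neg x t -> code_tag x 2.
Proof. intro H; exists t; exact H. Qed.

Lemma f_or_tag x t s : f_or x t s -> code_tag x 3.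
Proof. intros [q [_ H]]; exists q; exact H. Qed.

Lemma f_ex_tag x t s : f_ex x t s -> code_tag x 4.
Proof. intros [_ [q [_ H]]]; exists q; exact H. Qed.

Ltac tag_of H :=
  lazymatch type of H with
  | Defs.f_eq _ _ _ _ _ => constr:(f_eq_tag _ _ _ H)
  | Defs.f_in _ _ _ _ _ => constr:(f_in_tag _ _ _ H)
  | Defs.f_neg _ _ _ _ => constr:(f_neg_tag _ _ H)
  | Defs.f_or _ _ _ _ _ => constr:(f_or_tag _ _ _ H)
  | Defs.f_ex _ _ _ _ _ => constr:(f_ex_tag _ _ _ H)
  end.

Ltac clash :=
  exfalso;
  match goal with
  | H1 : _, H2 : _ |- _ =>
      let t1 := tag_of H1 in let t2 := tag_of H2 in
      discriminate (code_tag_unique _ _ _ t1 t2)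
  end.

Ltac code_inj :=
  repeat match goal with
  | H1 : Defs.f_neg _ _ ?x ?a, H2 : Defs.f_neg _ _ ?x ?b |- _ =>
      pose proof (f_neg_inj _ _ _ H1 H2); clear H2; subst
  | H1 : Defs.f_eq _ _ ?x _ _, H2 : Defs.f_eq _ _ ?x _ _ |- _ =>
      destruct (f_eq_inj _ _ _ _ _ H1 H2); clear H2; subst
  | H1 : Defs.f_in _ _ ?x _ _, H2 : Defs.f_in _ _ ?x _ _ |- _ =>
      destruct (f_in_inj _ _ _ _ _ H1 H2); clear H2; subst
  | H1 : Defs.f_or _ _ ?x _ _, H2 : Defs.f_or _ _ ?x _ _ |- _ =>
      destruct (f_or_inj _ _ _ _ _ H1 H2); clear H2; subst
  | H1 : Defs.f_ex _ _ ?x _ _, H2 : Defs.f_ex _ _ ?x _ _ |- _ =>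
      destruct (f_ex_inj _ _ _ _ _ H1 H2); clear H2; subst
  end.

Ltac destruct_all :=
  repeat match goal with
  | H : exists _, _ |- _ => destruct H
  | H : _ /\ _ |- _ => destruct H
  | H : _ \/ _ |- _ => destruct H
  end.

Lemma const_not_var t a i : const_t t a -> ~ var_t t i.
Proof.
  intros [z [Hz Ht]] [_ [o [Ho Ht']]].
  destruct (opair_inj _ _ _ _ _ Ht Ht') as [_ <-].
  destruct Ho as [y [_ Hy]]; exact (Hz y (in_succ _ _ Hy)).
Qed.

Lemma const_inj t a b : const_t t a -> const_t t b -> a = b.
Proof. intros [z [_ H]] [z' [_ H']]; exact (proj1 (opair_inj _ _ _ _ _ H H')). Qed.

(** * Finite ordinals *)

Lemma is_nat_empty z : empty z -> is_nat z.
Proof.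
  intro Hz; split; [split|].
  - intros y w _ Hy; destruct (Hz y Hy).
  - intros y Hy; destruct (Hz y Hy).
  - intros m [Hm | ->]; [destruct (Hz m Hm) | left; exact Hz].
Qed.

Lemma is_nat_succ n n' : is_nat n -> succ n n' -> is_nat n'.
Proof.
  intros [[Htr Hel] Hn] Hs; split; [split|].
  - intros y z Hz Hy; apply Hs; left.
    apply Hs in Hy; destruct Hy as [Hy | ->]; [exact (Htr _ _ Hz Hy) | exact Hz].
  - intros y Hy; apply Hs in Hy; destruct Hy as [Hy | ->]; [exact (Hel y Hy) | exact Htr].
  - intros m [Hm | ->].
    + apply Hn; apply Hs in Hm; exact Hm.
    + right; exists n; exact Hs.
Qed.

Lemma is_nat_elem n m : is_nat n -> ein m n -> is_nat m.
Proof.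
  intros [[Htr Hel] Hn] Hm; split; [split|].
  - exact (Hel m Hm).
  - intros y Hy; exact (Hel y (Htr _ _ Hy Hm)).
  - intros m0 Hm0; apply Hn; left; destruct Hm0 as [H | ->]; [exact (Htr _ _ H Hm) | exact Hm].
Qed.

Lemma is_nat_pred n : is_nat n -> ~ empty n -> exists m, succ m n.
Proof.
  intros [_ Hn] Hne; destruct (Hn n (or_intror eq_refl)) as [H | H]; [contradiction | exact H].
Qed.

(* A minimal counterexample in [n+1] exists by foundation, applied to a separated subset. *)
Lemma is_nat_ind (P : V -> Prop) :
  (forall E, definable E (fun e => P (e 0))) ->
  (forall z, empty z -> P z) ->
  (forall n n', is_nat n -> P n -> succ n n' -> P n') ->
  forall n, is_nat n -> P n.
Proof.
  intros HP H0 HS n Hn; apply NNPP; intro HnP.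
  destruct (succ_exists n) as [n' Hn'].
  destruct (set_class (fun e => ~ P (e 0)) (fun E => def_not E _ (HP E)) (fun _ => n)) as [X HX].
  destruct (separation n' X) as [A HA].
  destruct (foundation A) as [m [HmA Hmin]].
  { exists n; apply HA; split; [exact (in_succ _ _ Hn') | apply HX; exact HnP]. }
  apply HA in HmA; destruct HmA as [Hmn' HmX]; apply HX in HmX; simpl in HmX.
  assert (Hnat' : is_nat n') by exact (is_nat_succ _ _ Hn Hn').
  assert (Hm : is_nat m) by exact (is_nat_elem _ _ Hnat' Hmn').
  destruct (classic (empty m)) as [Hme | Hme]; [exact (HmX (H0 m Hme))|].
  destruct (is_nat_pred m Hm Hme) as [m0 Hm0].
  assert (Hm0n' : ein m0 n') by exact (proj1 (proj1 Hnat') _ _ (in_succ _ _ Hm0) Hmn').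
  destruct (classic (P m0)) as [HP0 | HP0].
  - exact (HmX (HS m0 m (is_nat_elem _ _ Hnat' Hm0n') HP0 Hm0)).
  - apply (Hmin m0 (in_succ _ _ Hm0)); apply HA; split; [exact Hm0n' | apply HX; exact HP0].
Qed.


(** * The structure of Depth_k-sentences *)

Definition mem2 W a b := exists p, opair p a b /\ ein p W.
Definition mem3 W g a b := exists p q, opair q a b /\ opair p g q /\ ein p W.

(* [Sub], [depth_le], [closed_in] and [pure] are defined through witness sets; the [*_clause]
   predicates name the recursion step that every member of a witness set must satisfy. *)
Definition sub_clause W g psi tau :=
  (exists t s t' s', term t /\ term s /\ sub_term g t t' /\ sub_term g s s' /\
     ((f_eq psi t s /\ f_eq tau t' s') \/ (f_in psi t s /\ f_in tau t' s'))) \/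
  (exists phi1 tau1, f_neg psi phi1 /\ f_neg tau tau1 /\ mem3 W g phi1 tau1) \/
  (exists phi1 phi2 tau1 tau2, f_or psi phi1 phi2 /\ f_or tau tau1 tau2 /\
     mem3 W g phi1 tau1 /\ mem3 W g phi2 tau2) \/
  (exists i phi1 tau1 h, f_ex psi i phi1 /\ f_ex tau i tau1 /\ remove g i h /\ mem3 W h phi1 tau1).
Definition sub_witness W := forall p, ein p W ->
  exists g psi tau q, opair q psi tau /\ opair p g q /\ func g /\ sub_clause W g psi tau.

Definition depth_clause W y d := is_nat d /\
  ((exists t s, term t /\ term s /\ (f_eq y t s \/ f_in y t s) /\ ~ empty d) \/
   (exists d', succ d' d /\
      ((exists phi, f_neg y phi /\ mem2 W phi d') \/
       (exists phi psi, f_or y phi psi /\ mem2 W phi d' /\ mem2 W psi d') \/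
       (exists i phi, f_ex y i phi /\ mem2 W phi d')))).
Definition depth_witness W := forall p, ein p W -> exists y d, opair p y d /\ depth_clause W y d.

Definition closed_clause W G y :=
  (exists t s, term t /\ term s /\ (f_eq y t s \/ f_in y t s) /\
     (forall i, var_t t i -> ein i G) /\ (forall i, var_t s i -> ein i G)) \/
  (exists phi, f_neg y phi /\ mem2 W G phi) \/
  (exists phi psi, f_or y phi psi /\ mem2 W G phi /\ mem2 W G psi) \/
  (exists i phi G', f_ex y i phi /\ (forall w, ein w G' <-> ein w G \/ w = i) /\ mem2 W G' phi).
Definition closed_witness W := forall p, ein p W -> exists G y, opair p G y /\ closed_clause W G y.

Definition pure_clause X y :=
  atomic_pure y \/
  (exists phi, f_neg y phi /\ ein phi X) \/
  (exists phi psi, f_or y phi psi /\ ein phi X /\ ein psi X) \/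
  (exists i phi, f_ex y i phi /\ ein phi X).
Definition pure_witness X := forall y, ein y X -> pure_clause X y.

Lemma Sub_witness f phi sigma :
  Sub f phi sigma <-> func f /\ exists W, mem3 W f phi sigma /\ sub_witness W.
Proof. reflexivity. Qed.

Lemma depth_le_witness x k : depth_le x k <-> exists W, mem2 W x k /\ depth_witness W.
Proof. reflexivity. Qed.

Lemma closed_in_witness G x : closed_in G x <-> exists W, mem2 W G x /\ closed_witness W.
Proof. reflexivity. Qed.

Lemma sub_witness_clause W g psi tau :
  sub_witness W -> mem3 W g psi tau -> func g /\ sub_clause W g psi tau.
Proof.
  intros HW [p [q [Hq [Hp HpW]]]].
  destruct (HW p HpW) as [g' [psi' [tau' [q' [Hq' [Hp' Hc]]]]]].
  destruct (opair_inj _ _ _ _ _ Hp Hp') as [<- <-].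
  destruct (opair_inj _ _ _ _ _ Hq Hq') as [<- <-]; exact Hc.
Qed.

Lemma depth_witness_clause W y d : depth_witness W -> mem2 W y d -> depth_clause W y d.
Proof.
  intros HW [p [Hp HpW]]; destruct (HW p HpW) as [y' [d' [Hp' Hc]]].
  destruct (opair_inj _ _ _ _ _ Hp Hp') as [<- <-]; exact Hc.
Qed.

Lemma closed_witness_clause W G y : closed_witness W -> mem2 W G y -> closed_clause W G y.
Proof.
  intros HW [p [Hp HpW]]; destruct (HW p HpW) as [G' [y' [Hp' Hc]]].
  destruct (opair_inj _ _ _ _ _ Hp Hp') as [<- <-]; exact Hc.
Qed.

Lemma FSent_unfold k x : FSent k x ->
  exists z f y Ws Wd X Wc,
    empty z /\ func f /\ sub_witness Ws /\ mem3 Ws f y x /\ depth_witness Wd /\ mem2 Wd y k /\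
    pure_witness X /\ ein y X /\ closed_witness Wc /\ mem2 Wc z x.
Proof.
  intros [[z [Hz [Wc [HWc HWc']]]] [y [f [[[X [HX HX']] [Wd [HWd HWd']]] [Hf [Ws [HWs HWs']]]]]]].
  exists z, f, y, Ws, Wd, X, Wc; tauto.
Qed.

Lemma FSent_fold k x z f y Ws Wd X Wc :
  empty z -> func f -> sub_witness Ws -> mem3 Ws f y x -> depth_witness Wd -> mem2 Wd y k ->
  pure_witness X -> ein y X -> closed_witness Wc -> mem2 Wc z x -> FSent k x.
Proof.
  intros Hz Hf HWs HWs' HWd HWd' HX HX' HWc HWc'; split.
  - exists z; split; [exact Hz | exists Wc; split; assumption].
  - exists y, f; split; [split|].
    + exists X; split; assumption.
    + exists Wd; split; assumption.
    + split; [exact Hf | exists Ws; split; assumption].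
Qed.

Ltac FSent_analyze HF :=
  let Hz := fresh "Hz" in let Hf := fresh "Hf" in
  let HWs := fresh "HWs" in let HWd := fresh "HWd" in
  let HX := fresh "HX" in let HWc := fresh "HWc" in
  let Hs := fresh "Hs" in let Hd := fresh "Hd" in let Hp := fresh "Hp" in let Hc := fresh "Hc" in
  destruct (FSent_unfold _ _ HF)
    as (z & f & y & Ws & Wd & X & Wc & Hz & Hf & HWs & Hs & HWd & Hd & HX & Hp & HWc & Hc);
  apply (sub_witness_clause _ _ _ _ HWs), proj2 in Hs; unfold sub_clause in Hs;
  destruct_all; try clash; code_inj;
  apply (depth_witness_clause _ _ _ HWd) in Hd; unfold depth_clause in Hd;
  destruct_all; try clash; code_inj;
  apply HX in Hp; unfold pure_clause, Defs.atomic_pure in Hp;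
  destruct_all; try clash; code_inj;
  apply (closed_witness_clause _ _ _ HWc) in Hc; unfold closed_clause in Hc;
  destruct_all; try clash; code_inj.

Lemma FSent_neg k phi psi : FSent k phi -> f_neg phi psi -> exists k0, succ k0 k /\ FSent k0 psi.
Proof.
  intros HF Hn; FSent_analyze HF.
  eexists; split; [eassumption | eapply FSent_fold; eauto].
Qed.

Lemma FSent_or k phi psi1 psi2 : FSent k phi -> f_or phi psi1 psi2 ->
  exists k0, succ k0 k /\ FSent k0 psi1 /\ FSent k0 psi2.
Proof.
  intros HF Ho; FSent_analyze HF.
  eexists; split; [eassumption | split; eapply FSent_fold; eauto].
Qed.

Lemma FSent_ex_body k phi i psi : FSent k phi -> f_ex phi i psi ->
  exists k0 y h Ws Wc G, succ k0 k /\ pure y /\ depth_le y k0 /\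
    sub_witness Ws /\ mem3 Ws h y psi /\ (forall p, ein p h -> exists a b, opair p a b /\ a <> i) /\
    closed_witness Wc /\ mem2 Wc G psi /\ (forall w, ein w G <-> w = i).
Proof.
  intros HF He; FSent_analyze HF.
  do 6 eexists; split; [eassumption|].
  split; [exists X; split; eassumption|].
  split; [exists Wd; split; eassumption|].
  do 2 (split; [eassumption|]).
  split; [match goal with Hr : Defs.remove _ _ f _ _ |- _ =>
             intros p Hph; apply Hr in Hph; apply Hph end|].
  split; [eassumption|]; split; [eassumption|].
  match goal with HG : forall w, ein w _ <-> ein w z \/ _ |- _ =>
    intro w; rewrite HG; split; [intros [Hw | Hw]; [destruct (Hz w Hw) | exact Hw] | auto] end.
Qed.

Lemma FSent_atomic k phi t s : FSent k phi -> f_eq phi t s \/ f_in phi t s ->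
  (exists a, const_t t a) /\ (exists b, const_t s b).
Proof.
  intros [[z [Hz Hcl]] _] Hts; apply closed_in_witness in Hcl; destruct Hcl as [Wc [Hc HWc]].
  apply (closed_witness_clause _ _ _ HWc) in Hc; unfold closed_clause in Hc.
  destruct_all; try clash; code_inj; unfold Defs.term in *; destruct_all;
    split; eauto; match goal with H : forall i, var_t _ i -> ein i z |- _ =>
      exfalso; eapply Hz, H; eassumption end.
Qed.

Lemma FSent_forms k phi : FSent k phi ->
  (exists t s, f_eq phi t s) \/ (exists t s, f_in phi t s) \/ (exists psi, f_neg phi psi) \/
  (exists psi1 psi2, f_or phi psi1 psi2) \/ (exists i psi, f_ex phi i psi).
Proof.
  intros [_ [y [f [_ [_ [Ws [Hs HWs]]]]]]].
  apply (sub_witness_clause _ _ _ _ HWs), proj2 in Hs; unfold sub_clause in Hs.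
  destruct_all; eauto 10.
Qed.

Lemma FSent_empty_depth z phi : empty z -> ~ FSent z phi.
Proof.
  intros Hz [_ [y [f [[_ Hdep] _]]]]; apply depth_le_witness in Hdep.
  destruct Hdep as [Wd [Hd HWd]]; apply (depth_witness_clause _ _ _ HWd) in Hd.
  unfold depth_clause in Hd; destruct_all; try contradiction; eapply Hz, in_succ; eassumption.
Qed.

Lemma depth_le_succ x d d' : depth_le x d -> succ d d' -> depth_le x d'.
Proof.
  intros Hd Hs; apply depth_le_witness in Hd; destruct Hd as [Wd [Htop HWd]].
  destruct (image_set (fun p p' => exists y a a', opair p y a /\ succ a a' /\ opair p' y a'))
    with (A := Wd) as [W HW].
  - intros E i j; prove_definable.
  - intros p p1 p2 [y [a [a1 [H1 [H2 H3]]]]] [y' [a' [a1' [H1' [H2' H3']]]]].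
    destruct (opair_inj _ _ _ _ _ H1 H1') as [<- <-].
    rewrite (succ_unique _ _ _ H2 H2') in H3; exact (opair_unique _ _ _ _ H3 H3').
  - assert (Hlift : forall y a a', mem2 Wd y a -> succ a a' -> mem2 W y a').
    { intros y a a' [p [Hp HpW]] Ha; destruct (opair_exists y a') as [p' Hp'].
      exists p'; split; [exact Hp' | apply HW; exists p; split; [exact HpW | eauto 6]]. }
    apply depth_le_witness; exists W; split; [exact (Hlift _ _ _ Htop Hs)|].
    intros p' Hp'; apply HW in Hp'; destruct Hp' as [p [HpW [y [a [a' [Hp [Ha Hp']]]]]]].
    destruct (HWd p HpW) as [y0 [a0 [Hp0 [Hnat Hc]]]].
    destruct (opair_inj _ _ _ _ _ Hp Hp0) as [<- <-].
    exists y, a'; split; [exact Hp'|]; split; [exact (is_nat_succ _ _ Hnat Ha)|].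
    destruct Hc as [[t [s [Ht [Hs' [Hts _]]]]] | [d0 [Hd0 Hc]]].
    + left; exists t, s; repeat split; auto; intro He; exact (He a (in_succ _ _ Ha)).
    + right; exists a; split; [exact Ha|].
      destruct Hc as [[phi [Hn Hw]] | [[phi [psi [Ho [Hw1 Hw2]]]] | [i [phi [He Hw]]]]].
      * left; exists phi; split; [exact Hn | exact (Hlift _ _ _ Hw Hd0)].
      * right; left; exists phi, psi; split; [exact Ho|].
        split; [exact (Hlift _ _ _ Hw1 Hd0) | exact (Hlift _ _ _ Hw2 Hd0)].
      * right; right; exists i, phi; split; [exact He | exact (Hlift _ _ _ Hw Hd0)].
Qed.

Lemma depth_le_mono n : is_nat n -> forall j x, ein j n -> depth_le x j -> depth_le x n.
Proof.
  revert n; apply (is_nat_ind (fun n => forall j x, ein j n -> depth_le x j -> depth_le x n)).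
  - intro E; prove_definable.
  - intros z Hz j x Hj; destruct (Hz j Hj).
  - intros n n' Hn IH Hs j x Hj Hd; apply (depth_le_succ _ n); [|exact Hs].
    apply Hs in Hj; destruct Hj as [Hj | ->]; [exact (IH j x Hj Hd) | exact Hd].
Qed.

Lemma FSent_depth_mono k k' x :
  (forall y, depth_le y k -> depth_le y k') -> FSent k x -> FSent k' x.
Proof.
  intros Hkk' [Hs [phi [f [[Hp Hd] HS]]]].
  split; [exact Hs | exists phi, f; split; [split; [exact Hp | exact (Hkk' phi Hd)] | exact HS]].
Qed.

Lemma FSent_succ k k' x : FSent k x -> succ k k' -> FSent k' x.
Proof. intros Hx Hk; exact (FSent_depth_mono _ _ _ (fun y Hy => depth_le_succ _ _ _ Hy Hk) Hx). Qed.

Lemma FSent_mono j k x : FSent j x -> is_nat k -> ein j k -> FSent k x.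
Proof. intros Hx Hk Hj; exact (FSent_depth_mono _ _ _ (fun y => depth_le_mono k Hk j y Hj) Hx). Qed.

(** * Composing substitutions *)

Definition disjoint_dom ga gb := forall p p' x y y',
  opair p x y -> opair p' x y' -> ein p ga -> ein p' gb -> False.
Definition union2 g ga gb := forall p, ein p g <-> ein p ga \/ ein p gb.
Definition dom_diff G' G g :=
  forall w, ein w G' <-> ein w G /\ ~ exists p y, opair p w y /\ ein p g.

Lemma func_union g ga gb : func ga -> func gb -> disjoint_dom ga gb -> union2 g ga gb -> func g.
Proof.
  intros [Ha1 Ha2] [Hb1 Hb2] Hd Hu; split.
  - intros p Hp; apply Hu in Hp; destruct Hp; auto.
  - intros p p' a b b' Hp Hp' H1 H2; apply Hu in H1, H2.
    destruct H1 as [H1 | H1], H2 as [H2 | H2].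
    + exact (Ha2 _ _ _ _ _ Hp Hp' H1 H2).
    + destruct (Hd _ _ _ _ _ Hp Hp' H1 H2).
    + destruct (Hd _ _ _ _ _ Hp' Hp H2 H1).
    + exact (Hb2 _ _ _ _ _ Hp Hp' H1 H2).
Qed.

Lemma sub_term_compose g ga gb t t' t'' :
  sub_term ga t t' -> sub_term gb t' t'' -> union2 g ga gb -> sub_term g t t''.
Proof.
  intros H1 H2 Hu.
  destruct H1 as [[i [a [Hv [[p [Hp Hpg]] Hc]]]] | [Hn ->]].
  - destruct H2 as [[i' [a' [Hv' _]]] | [_ ->]]; [destruct (const_not_var _ _ _ Hc Hv')|].
    left; exists i, a; split; [exact Hv | split; [|exact Hc]].
    exists p; split; [exact Hp | apply Hu; auto].
  - destruct H2 as [[i' [a' [Hv' [[p [Hp Hpg]] Hc]]]] | [Hn' ->]].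
    + left; exists i', a'; split; [exact Hv' | split; [|exact Hc]].
      exists p; split; [exact Hp | apply Hu; auto].
    + right; split; [|reflexivity]; intros [i [a [Hv [p [Hp Hpg]]]]]; apply Hu in Hpg.
      destruct Hpg; [apply Hn | apply Hn']; (exists i, a; split; [exact Hv | exists p; auto]).
Qed.

Lemma sub_clause_compose Wa Wb W ga gb g c0 c1 c2 :
  (forall ga gb g c0 c1 c2, mem3 Wa ga c0 c1 -> mem3 Wb gb c1 c2 ->
     disjoint_dom ga gb -> union2 g ga gb -> mem3 W g c0 c2) ->
  sub_clause Wa ga c0 c1 -> sub_clause Wb gb c1 c2 ->
  disjoint_dom ga gb -> union2 g ga gb -> sub_clause W g c0 c2.
Proof.
  intros HW Ha Hb Hd Hu; unfold sub_clause in Ha, Hb.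
  destruct Ha as [A|[A|[A|A]]]; destruct Hb as [B|[B|[B|B]]]; destruct_all; try clash; code_inj.
  - left; match goal with _ : f_eq c0 ?t ?s, _ : f_eq c2 ?t' ?s' |- _ => exists t, s, t', s' end.
    do 2 (split; [eassumption|]).
    split; [eapply sub_term_compose; eassumption|]; split; [eapply sub_term_compose; eassumption|].
    left; split; eassumption.
  - left; match goal with _ : f_in c0 ?t ?s, _ : f_in c2 ?t' ?s' |- _ => exists t, s, t', s' end.
    do 2 (split; [eassumption|]).
    split; [eapply sub_term_compose; eassumption|]; split; [eapply sub_term_compose; eassumption|].
    right; split; eassumption.
  - right; left; do 2 eexists; do 2 (split; [eassumption|]); eapply HW; eassumption.
  - right; right; left; do 4 eexists; do 2 (split; [eassumption|]); split; eapply HW; eassumption.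
  - right; right; right.
    match goal with
    | Ha : Defs.remove _ _ ga ?i ?ha, Hb : Defs.remove _ _ gb ?i ?hb,
      Hma : mem3 Wa ?ha ?phi _, Hmb : mem3 Wb ?hb _ ?tau |- _ =>
        destruct (union2_exists ha hb) as [h Hh];
        exists i, phi, tau, h; do 2 (split; [eassumption|]); split;
        [ intro p; rewrite (Hh p), (Hu p), (Ha p), (Hb p); tauto
        | apply (HW ha hb h phi _ tau Hma Hmb); [|exact Hh] ];
        intros p p' ? ? ? Hp Hp' Hpa Hpb; apply Ha in Hpa; apply Hb in Hpb;
        exact (Hd _ _ _ _ _ Hp Hp' (proj1 Hpa) (proj1 Hpb))
    end.
Qed.

(* Substituting [ga] and then [gb] is substituting [ga U gb] when the domains are disjoint. *)
Lemma sub_witness_compose Wa Wb : sub_witness Wa -> sub_witness Wb ->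
  exists W, sub_witness W /\
    forall ga gb g c0 c1 c2, mem3 Wa ga c0 c1 -> mem3 Wb gb c1 c2 ->
      disjoint_dom ga gb -> union2 g ga gb -> mem3 W g c0 c2.
Proof.
  intros HWa HWb.
  destruct (image2_set (fun pa pb e => exists ga c0 c1 qa gb c2 qb g q,
     opair qa c0 c1 /\ opair pa ga qa /\ opair qb c1 c2 /\ opair pb gb qb /\ disjoint_dom ga gb /\
     union2 g ga gb /\ opair q c0 c2 /\ opair e g q)) with (A := Wa) (B := Wb) as [W HW].
  - intros E i j k; unfold disjoint_dom, union2; prove_definable.
  - intros pa pb e e'
      (ga & c0 & c1 & qa & gb & c2 & qb & g & q & H1 & H2 & H3 & H4 & _ & H6 & H7 & H8)
      (ga' & c0' & c1' & qa' & gb' & c2' & qb' & g' & q' &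
       H1' & H2' & H3' & H4' & _ & H6' & H7' & H8').
    destruct (opair_inj _ _ _ _ _ H2 H2') as [<- <-], (opair_inj _ _ _ _ _ H4 H4') as [<- <-].
    destruct (opair_inj _ _ _ _ _ H1 H1') as [<- <-], (opair_inj _ _ _ _ _ H3 H3') as [_ <-].
    assert (g = g') as <- by (apply set_ext; intro x; rewrite (H6 x), (H6' x); tauto).
    rewrite (opair_unique _ _ _ _ H7 H7') in H8; exact (opair_unique _ _ _ _ H8 H8').
  - assert (Hmem : forall ga gb g c0 c1 c2, mem3 Wa ga c0 c1 -> mem3 Wb gb c1 c2 ->
        disjoint_dom ga gb -> union2 g ga gb -> mem3 W g c0 c2).
    { intros ga gb g c0 c1 c2 [pa [qa [Hqa [Hpa Hpain]]]] [pb [qb [Hqb [Hpb Hpbin]]]] Hd Hu.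
      destruct (opair_exists c0 c2) as [q Hq]; destruct (opair_exists g q) as [e He].
      exists e, q; split; [exact Hq | split; [exact He|]].
      apply HW; exists pa, pb; split; [exact Hpain | split; [exact Hpbin|]].
      exists ga, c0, c1, qa, gb, c2, qb, g, q; tauto. }
    exists W; split; [|exact Hmem].
    intros e He; apply HW in He.
    destruct He as (pa & pb & Hpa & Hpb & ga & c0 & c1 & qa & gb & c2 & qb & g & q &
                    H1 & H2 & H3 & H4 & Hd & Hu & Hq & He).
    assert (Ha : mem3 Wa ga c0 c1) by (exists pa, qa; auto).
    assert (Hb : mem3 Wb gb c1 c2) by (exists pb, qb; auto).
    destruct (sub_witness_clause _ _ _ _ HWa Ha) as [Hfa Hca].
    destruct (sub_witness_clause _ _ _ _ HWb Hb) as [Hfb Hcb].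
    exists g, c0, c2, q; split; [exact Hq | split; [exact He|]].
    split; [exact (func_union _ _ _ Hfa Hfb Hd Hu)|].
    exact (sub_clause_compose _ _ _ _ _ _ _ _ _ Hmem Hca Hcb Hd Hu).
Qed.

Lemma sub_term_closed g t t' G G' :
  sub_term g t t' -> term t -> (forall i, var_t t i -> ein i G) -> dom_diff G' G g ->
  term t' /\ forall i, var_t t' i -> ein i G'.
Proof.
  intros Hs Ht HG Hd; destruct Hs as [[i [a [Hv [Happ Hc]]]] | [Hn ->]].
  - split; [left; exists a; exact Hc | intros j Hj; destruct (const_not_var _ _ _ Hc Hj)].
  - split; [exact Ht|]; intros j Hj; apply Hd; split; [exact (HG j Hj)|].
    intros [p [y [Hp Hpg]]]; apply Hn; exists j, y; split; [exact Hj | exists p; auto].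
Qed.

Lemma dom_diff_remove G' G g i h G1 G1' :
  dom_diff G' G g -> remove g i h ->
  (forall w, ein w G1 <-> ein w G \/ w = i) -> (forall w, ein w G1' <-> ein w G' \/ w = i) ->
  dom_diff G1' G1 h.
Proof.
  intros Hd Hr HG1 HG1' w; rewrite (HG1' w), (HG1 w), (Hd w).
  destruct (classic (w = i)) as [-> | Hwi].
  - split; [intros _; split; [right; reflexivity|] | intros _; right; reflexivity].
    intros [p [y [Hp Hph]]]; apply Hr in Hph; destruct Hph as [_ [a [b [Hab Hne]]]].
    exact (Hne (proj1 (opair_inj _ _ _ _ _ Hab Hp))).
  - split.
    + intros [[HwG Hnd] | Hw]; [|contradiction]; split; [left; exact HwG|].
      intros [p [y [Hp Hph]]]; apply Hr in Hph; apply Hnd; exists p, y; tauto.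
    + intros [[HwG | Hw] Hnd]; [|contradiction]; left; split; [exact HwG|].
      intros [p [y [Hp Hpg]]]; apply Hnd; exists p, y; split; [exact Hp|].
      apply Hr; split; [exact Hpg | exists w, y; auto].
Qed.

Lemma closed_clause_compose Wc Wb W G c1 g c2 G' :
  (forall G c1 g c2 G', mem2 Wc G c1 -> mem3 Wb g c1 c2 -> dom_diff G' G g -> mem2 W G' c2) ->
  closed_clause Wc G c1 -> sub_clause Wb g c1 c2 -> dom_diff G' G g -> closed_clause W G' c2.
Proof.
  intros HW Hc Hs Hd; unfold closed_clause in Hc; unfold sub_clause in Hs.
  destruct Hc as [A|[A|[A|A]]]; destruct Hs as [B|[B|[B|B]]]; destruct_all; try clash; code_inj.
  - left; match goal with _ : f_eq c2 ?t' ?s' |- _ => exists t', s' end.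
    match goal with
    | Ht : sub_term g ?t _, Hs : sub_term g ?s _, _ : f_eq c1 ?t ?s |- _ =>
        destruct (sub_term_closed _ _ _ _ _ Ht ltac:(eassumption) ltac:(eassumption) Hd);
        destruct (sub_term_closed _ _ _ _ _ Hs ltac:(eassumption) ltac:(eassumption) Hd)
    end; tauto.
  - left; match goal with _ : f_in c2 ?t' ?s' |- _ => exists t', s' end.
    match goal with
    | Ht : sub_term g ?t _, Hs : sub_term g ?s _, _ : f_in c1 ?t ?s |- _ =>
        destruct (sub_term_closed _ _ _ _ _ Ht ltac:(eassumption) ltac:(eassumption) Hd);
        destruct (sub_term_closed _ _ _ _ _ Hs ltac:(eassumption) ltac:(eassumption) Hd)
    end; tauto.
  - right; left; eexists; split; [eassumption | eapply HW; eassumption].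
  - right; right; left.
    match goal with
    | H1 : mem2 Wc G ?a, H2 : mem2 Wc G ?b, Hs1 : mem3 Wb g ?a ?ta, Hs2 : mem3 Wb g ?b ?tb,
      _ : f_or c1 ?a ?b |- _ =>
        exists ta, tb; split; [eassumption|];
        split; [exact (HW _ _ _ _ _ H1 Hs1 Hd) | exact (HW _ _ _ _ _ H2 Hs2 Hd)]
    end.
  - right; right; right.
    match goal with
    | Hr : Defs.remove _ _ g ?i ?h, HG1 : forall w, ein w ?G1 <-> ein w G \/ w = ?i,
      Hm : mem2 Wc ?G1 ?phi, Hms : mem3 Wb ?h ?phi ?tau |- _ =>
        destruct (sing_exists i) as [si Hsi]; destruct (union2_exists G' si) as [G1' HG1'];
        assert (HG1'' : forall w, ein w G1' <-> ein w G' \/ w = i)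
          by (intro w; rewrite (HG1' w), (Hsi w); tauto);
        exists i, tau, G1'; split; [eassumption | split; [exact HG1''|]];
        exact (HW _ _ _ _ _ Hm Hms (dom_diff_remove _ _ _ _ _ _ _ Hd Hr HG1 HG1''))
    end.
Qed.

(* Substituting [g] into a formula whose free variables lie in [G] leaves free variables in
   [G \ dom g]. *)
Lemma closed_witness_compose Wc Wb : closed_witness Wc -> sub_witness Wb ->
  exists W, closed_witness W /\
    forall G c1 g c2 G', mem2 Wc G c1 -> mem3 Wb g c1 c2 -> dom_diff G' G g -> mem2 W G' c2.
Proof.
  intros HWc HWb.
  destruct (image2_set (fun pc pb e => exists G c1 g c2 qb G',
     opair pc G c1 /\ opair qb c1 c2 /\ opair pb g qb /\ dom_diff G' G g /\ opair e G' c2))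
     with (A := Wc) (B := Wb) as [W HW].
  - intros E i j k; unfold dom_diff; prove_definable.
  - intros pc pb e e' (G & c1 & g & c2 & qb & G' & H1 & H2 & H3 & H4 & H5)
      (G0 & c1' & g' & c2' & qb' & G0' & H1' & H2' & H3' & H4' & H5').
    destruct (opair_inj _ _ _ _ _ H1 H1') as [<- <-], (opair_inj _ _ _ _ _ H3 H3') as [<- <-].
    destruct (opair_inj _ _ _ _ _ H2 H2') as [_ <-].
    assert (G' = G0') as <- by (apply set_ext; intro x; rewrite (H4 x), (H4' x); tauto).
    exact (opair_unique _ _ _ _ H5 H5').
  - assert (Hmem : forall G c1 g c2 G', mem2 Wc G c1 -> mem3 Wb g c1 c2 -> dom_diff G' G g ->
        mem2 W G' c2).
    { intros G c1 g c2 G' [pc [Hpc Hpcin]] [pb [qb [Hqb [Hpb Hpbin]]]] Hd.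
      destruct (opair_exists G' c2) as [e He]; exists e; split; [exact He|].
      apply HW; exists pc, pb; split; [exact Hpcin | split; [exact Hpbin|]].
      exists G, c1, g, c2, qb, G'; tauto. }
    exists W; split; [|exact Hmem].
    intros e He; apply HW in He.
    destruct He as (pc & pb & Hpc & Hpb & G & c1 & g & c2 & qb & G' & H1 & H2 & H3 & Hd & He).
    assert (Hc : mem2 Wc G c1) by (exists pc; auto).
    assert (Hb : mem3 Wb g c1 c2) by (exists pb, qb; auto).
    pose proof (closed_witness_clause _ _ _ HWc Hc) as Hcc.
    destruct (sub_witness_clause _ _ _ _ HWb Hb) as [_ Hcb].
    exists G', c2; split; [exact He|].
    exact (closed_clause_compose _ _ _ _ _ _ _ _ Hmem Hcc Hcb Hd).
Qed.

(* With [psi = Sub h y] and [i] outside [dom h], the instance is [sigma = Sub (h U {(i, a)}) y],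
   a closed instance of the same formula [y] of depth [<= k0]. *)
Lemma FSent_instance k phi i psi a sigma :
  FSent k phi -> f_ex phi i psi -> Sub1 i a psi sigma -> exists k0, succ k0 k /\ FSent k0 sigma.
Proof.
  intros HF He [f1 [Hf1 HS1]].
  destruct (FSent_ex_body _ _ _ _ HF He)
    as (k0 & y & h & Ws & Wc & G & Hk0 & Hy & Hdep & HWs & Hs & Hh & HWc & Hc & HG).
  apply Sub_witness in HS1; destruct HS1 as [Hfunc1 [Wb [Hb HWb]]].
  exists k0; split; [exact Hk0|].
  destruct (sub_witness_compose _ _ HWs HWb) as [W [HW HWmem]].
  destruct (closed_witness_compose _ _ HWc HWb) as [W' [HW' HW'mem]].
  destruct (union2_exists h f1) as [g Hg]; destruct empty_exists as [z Hz].
  assert (Hd : disjoint_dom h f1).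
  { intros p p' x y1 y' Hp Hp' Hph Hpf; apply Hh in Hph; destruct Hph as [a' [b' [Hab Hne]]].
    apply Hf1 in Hpf; apply Hne.
    rewrite (proj1 (opair_inj _ _ _ _ _ Hab Hp)); exact (proj1 (opair_inj _ _ _ _ _ Hp' Hpf)). }
  split.
  - exists z; split; [exact Hz|]; apply closed_in_witness; exists W'; split; [|exact HW'].
    apply (HW'mem G psi f1 sigma z Hc Hb); intro w; split; [intro Hw; destruct (Hz w Hw)|].
    intros [HwG Hn]; apply HG in HwG; subst w; exfalso; apply Hn.
    destruct (opair_exists i a) as [p Hp]; exists p, a; split; [exact Hp | apply Hf1, Hp].
  - exists y, g; split; [split; assumption|].
    apply Sub_witness; split.
    + exact (func_union _ _ _ (proj1 (sub_witness_clause _ _ _ _ HWs Hs)) Hfunc1 Hd Hg).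
    + exists W; split; [exact (HWmem _ _ _ _ _ _ Hs Hb Hd Hg) | exact HW].
Qed.

(** * Truth classes *)

Definition tarski (inT : V -> Prop) x :=
  (exists t s a b, f_eq x t s /\ const_t t a /\ const_t s b /\ a = b) \/
  (exists t s a b, f_in x t s /\ const_t t a /\ const_t s b /\ ein a b) \/
  (exists psi, f_neg x psi /\ ~ inT psi) \/
  (exists psi1 psi2, f_or x psi1 psi2 /\ (inT psi1 \/ inT psi2)) \/
  (exists i psi, f_ex x i psi /\ exists a sigma, Sub1 i a psi sigma /\ inT sigma).

Ltac tarski_cases H :=
  unfold tarski in H; destruct_all; try clash; code_inj;
  repeat match goal with
  | H1 : Defs.const_t _ _ ?t ?a, H2 : Defs.const_t _ _ ?t ?b |- _ =>
      pose proof (const_inj _ _ _ H1 H2); clear H2; subst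
  end.

Lemma tarski_eq inT x t s a b :
  f_eq x t s -> const_t t a -> const_t s b -> (tarski inT x <-> a = b).
Proof.
  intros Hx Ha Hb; split; [intro H; tarski_cases H; reflexivity|].
  intro Hab; left; exists t, s, a, b; auto.
Qed.

Lemma tarski_in inT x t s a b :
  f_in x t s -> const_t t a -> const_t s b -> (tarski inT x <-> ein a b).
Proof.
  intros Hx Ha Hb; split; [intro H; tarski_cases H; assumption|].
  intro Hab; right; left; exists t, s, a, b; auto.
Qed.

Lemma tarski_neg inT x psi : f_neg x psi -> (tarski inT x <-> ~ inT psi).
Proof.
  intro Hx; split; [intro H; tarski_cases H; assumption|].
  intro Hpsi; right; right; left; exists psi; auto.
Qed.

Lemma tarski_or inT x psi1 psi2 : f_or x psi1 psi2 -> (tarski inT x <-> inT psi1 \/ inT psi2).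
Proof.
  intro Hx; split; [intro H; tarski_cases H; [left | right]; assumption|].
  intro Hpsi; right; right; right; left; exists psi1, psi2; auto.
Qed.

Lemma tarski_ex inT x i psi :
  f_ex x i psi -> (tarski inT x <-> exists a sigma, Sub1 i a psi sigma /\ inT sigma).
Proof.
  intro Hx; split; [intro H; tarski_cases H; eauto|].
  intro Hpsi; right; right; right; right; exists i, psi; auto.
Qed.

Lemma truth_class_tarski k T :
  truth_class k T <->
  (forall x, cin x T -> FSent k x) /\
  (forall x, FSent k x -> (cin x T <-> tarski (fun y => cin y T) x)).
Proof.
  split.
  - intros (HT1 & HT2 & HT3 & HT4 & HT5 & HT6); split; [exact HT1|]; intros x Hx.
    destruct (FSent_forms _ _ Hx)
      as [(t & s & H) | [(t & s & H) | [(psi & H) | [(p1 & p2 & H) | (i & psi & H)]]]].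
    + destruct (FSent_atomic _ _ _ _ Hx (or_introl H)) as [[a Ha] [b Hb]].
      rewrite (tarski_eq _ _ _ _ _ _ H Ha Hb); exact (HT2 _ _ _ _ _ Hx Ha Hb H).
    + destruct (FSent_atomic _ _ _ _ Hx (or_intror H)) as [[a Ha] [b Hb]].
      rewrite (tarski_in _ _ _ _ _ _ H Ha Hb); exact (HT3 _ _ _ _ _ Hx Ha Hb H).
    + rewrite (tarski_neg _ _ _ H); destruct (FSent_neg _ _ _ Hx H) as [k0 [Hk0 Hpsi]].
      exact (HT4 _ _ Hx (FSent_succ _ _ _ Hpsi Hk0) H).
    + rewrite (tarski_or _ _ _ _ H); exact (HT5 _ _ _ Hx H).
    + rewrite (tarski_ex _ _ _ _ H); exact (HT6 _ _ _ Hx H).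
  - intros [HT1 HT]; split; [exact HT1|]; split; [|split; [|split; [|split]]].
    + intros x t s a b Hx Ha Hb H; rewrite (HT x Hx); exact (tarski_eq _ _ _ _ _ _ H Ha Hb).
    + intros x t s a b Hx Ha Hb H; rewrite (HT x Hx); exact (tarski_in _ _ _ _ _ _ H Ha Hb).
    + intros phi psi Hphi _ H; rewrite (HT phi Hphi); exact (tarski_neg _ _ _ H).
    + intros phi psi1 psi2 Hphi H; rewrite (HT phi Hphi); exact (tarski_or _ _ _ _ H).
    + intros phi i psi Hphi H; rewrite (HT phi Hphi); exact (tarski_ex _ _ _ _ H).
Qed.

(* The Tarski clause of a sentence only consults its immediate subsentences and instances,
   which all have smaller depth. *)
Lemma tarski_local k x (inT inT' : V -> Prop) :
  FSent k x -> (forall k0 y, succ k0 k -> FSent k0 y -> (inT y <-> inT' y)) ->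
  (tarski inT x <-> tarski inT' x).
Proof.
  intros Hx Hagree.
  destruct (FSent_forms _ _ Hx)
    as [(t & s & H) | [(t & s & H) | [(psi & H) | [(p1 & p2 & H) | (i & psi & H)]]]].
  - destruct (FSent_atomic _ _ _ _ Hx (or_introl H)) as [[a Ha] [b Hb]].
    rewrite 2!(tarski_eq _ _ _ _ _ _ H Ha Hb); reflexivity.
  - destruct (FSent_atomic _ _ _ _ Hx (or_intror H)) as [[a Ha] [b Hb]].
    rewrite 2!(tarski_in _ _ _ _ _ _ H Ha Hb); reflexivity.
  - rewrite 2!(tarski_neg _ _ _ H); destruct (FSent_neg _ _ _ Hx H) as [k0 [Hk0 Hpsi]].
    rewrite (Hagree _ _ Hk0 Hpsi); reflexivity.
  - rewrite 2!(tarski_or _ _ _ _ H); destruct (FSent_or _ _ _ _ Hx H) as [k0 [Hk0 [H1 H2]]].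
    rewrite (Hagree _ _ Hk0 H1), (Hagree _ _ Hk0 H2); reflexivity.
  - rewrite 2!(tarski_ex _ _ _ _ H).
    split; intros [a [sigma [HS Hsigma]]]; exists a, sigma; split; [exact HS | | exact HS |];
      destruct (FSent_instance _ _ _ _ _ _ Hx H HS) as [k0 [Hk0 Hs]];
      [apply (Hagree _ _ Hk0 Hs) | apply (Hagree _ _ Hk0 Hs)]; exact Hsigma.
Qed.

Lemma C_Most_empty z : empty z -> C_Most z.
Proof.
  intro Hz; split; [exact (is_nat_empty z Hz)|].
  destruct (set_class (fun _ => False) def_false (fun _ => z)) as [T HT].
  exists T; apply truth_class_tarski; split.
  - intros x Hx; destruct (proj1 (HT x) Hx).
  - intros x Hx; destruct (FSent_empty_depth _ _ Hz Hx).
Qed.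

(* The new truth class evaluates depth-[k+1] sentences by one Tarski step over the old one. *)
Lemma C_Most_succ k k' : C_Most k -> succ k k' -> C_Most k'.
Proof.
  intros [Hk [T HT]] Hs; split; [exact (is_nat_succ _ _ Hk Hs)|].
  destruct (definable_class (fun _ => T)
              (fun e => FSent (e 1) (e 0) /\ tarski (fun y => cin y T) (e 0))
              ltac:(unfold tarski; prove_definable) (fun _ => k')) as [T' HT']; simpl in HT'.
  apply truth_class_tarski in HT; destruct HT as [HT1 HT].
  assert (Hagree : forall k0 y, succ k0 k' -> FSent k0 y -> (cin y T <-> cin y T')).
  { intros k0 y Hk0 Hy; rewrite (succ_inj _ _ _ Hk0 Hs) in Hy.
    rewrite HT', (HT y Hy); split; [|tauto].
    intro Hty; split; [exact (FSent_succ _ _ _ Hy Hs) | exact Hty]. }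
  exists T'; apply truth_class_tarski; split.
  - intros x Hx; apply HT' in Hx; tauto.
  - intros x Hx; rewrite HT', (tarski_local _ _ _ _ Hx Hagree); tauto.
Qed.

Lemma C_Most_downward k j : C_Most k -> is_nat j -> ein j k -> C_Most j.
Proof.
  intros [Hk [T HT]] Hj Hjk; split; [exact Hj|].
  destruct (definable_class (fun _ => T) (fun e => FSent (e 1) (e 0) /\ cin (e 0) T)
              ltac:(prove_definable) (fun _ => j)) as [T' HT']; simpl in HT'.
  apply truth_class_tarski in HT; destruct HT as [HT1 HT].
  assert (Hagree : forall k0 y, succ k0 j -> FSent k0 y -> (cin y T <-> cin y T')).
  { intros k0 y Hk0 Hy; rewrite HT'; pose proof (FSent_succ _ _ _ Hy Hk0); tauto. }
  exists T'; apply truth_class_tarski; split.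
  - intros x Hx; apply HT' in Hx; tauto.
  - intros x Hx; rewrite HT', (HT x (FSent_mono _ _ _ Hx Hk Hjk)), (tarski_local _ _ _ _ Hx Hagree).
    tauto.
Qed.

End MostowskiCut.

Lemma C_Most_cut (S C : Type) (ein : S -> S -> Prop) (cin : S -> C -> Prop) :
  GB_base S C ein cin -> is_cut_Most S C ein cin.
Proof.
  intro HGB; split; [exact (C_Most_empty HGB)|].
  split; [exact (C_Most_succ HGB) | exact (C_Most_downward HGB)].
Qed.

Theorem lemma3p2 :
  (forall (S C : Type) (ein : S -> S -> Prop) (cin : S -> C -> Prop),
      GB_plus_inf S C ein cin -> is_cut_Most S C ein cin) /\
  (forall (S C : Type) (ein : S -> S -> Prop) (cin : S -> C -> Prop),
      GB_minus_inf S C ein cin -> is_cut_Most S C ein cin).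
Proof.
  split; intros S C ein cin [HGB _]; exact (C_Most_cut S C ein cin HGB).
Qed.
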